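(* For every $f:\{0,1\}^d\to\{0,1\}$, with $x,y,z$ sampled uniformly and independently from $\{0,1\}^d$, $$\Pr[(x,y)\text{ violates linearity}]\le 3\varepsilon_f,\qquad \Pr[(x,y)\text{ and }(x,z)\text{ both violate linearity}]\le\varepsilon_f+4\varepsilon_f^2.$$
   Context: A pair $(x,y)\in(\{0,1\}^d)^2$ violates linearity (for $f$) if $f(x)+f(y)\neq f(x\oplus y)$ (mod 2), where $\oplus$ is bitwise XOR. $\varepsilon_f$ (distance of $f$ to linearity) is the minimum over linear $g$ of $\Pr_{x\sim\{0,1\}^d}[f(x)\neq g(x)]$, where $g:\{0,1\}^d\to\{0,1\}$ is linear if $g(x)=\sum_{i\in S}x[i]\bmod2$ for some $S\subseteq[d]$. *)

From mathcomp Require Import all_boot all_order all_algebra.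
Set Implicit Arguments. Unset Strict Implicit. Unset Printing Implicit Defensive.
Import Order.TTheory GRing.Theory Num.Theory.

(* Points of {0,1}^d: finite functions 'I_d -> bool (bool = F_2, addition = xor). *)
Definition cube (d : nat) := {ffun 'I_d -> bool}.

Definition bxor d (x y : cube d) : cube d := [ffun i => x i (+) y i].

Definition linfun_S d (S : {set 'I_d}) (x : cube d) : bool :=
  odd (\sum_(i in S) (x i : nat)).

Definition violates d (f : cube d -> bool) (x y : cube d) : bool :=
  (f x (+) f y) != f (bxor x y).

Local Open Scope ring_scope.

Definition dist_lin d (f : cube d -> bool) (S : {set 'I_d}) : rat :=
  #|[set x : cube d | f x != linfun_S S x]|%:R / (2 ^ d)%:R.

(* eps_f = min over linear g (i.e. over S) of the disagreement probability *)
Definition eps_lin d (f : cube d -> bool) : rat :=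
  \big[Num.min/1]_(S : {set 'I_d}) dist_lin f S.

Definition pr_viol d (f : cube d -> bool) : rat :=
  #|[set p : cube d * cube d | violates f p.1 p.2]|%:R / (2 ^ d * 2 ^ d)%:R.

Definition pr_viol2 d (f : cube d -> bool) : rat :=
  #|[set p : cube d * (cube d * cube d) |
      violates f p.1 p.2.1 && violates f p.1 p.2.2]|%:R
  / (2 ^ d * 2 ^ d * 2 ^ d)%:R.

From mathcomp Require Import all_boot all_order all_algebra.
From mathcomp Require Import ring lra.
Import Order.TTheory GRing.Theory Num.Theory.
Local Open Scope ring_scope.

(* Fix a linear function g = linfun_S S and let A be the set of points where f
   and g disagree.  Since g(x) + g(y) = g(x xor y), a pair (x, y) can only
   violate linearity for f if one of x, y, x xor y lies in A.  Writing
   "partner b x y" for y (b = false) or x xor y (b = true), a violation at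
   (x, y) thus forces x in A or some partner of (x, y) in A.  For fixed x,
   every partner map y |-> partner b x y is a bijection of the cube, so each
   of these events has probability |A|/2^d = dist_lin f S; the union bound
   gives Pr[(x,y) violates] <= 3 dist_lin f S.  For two violations sharing x,
   either x is in A, or a partner of (x, y) and a partner of (x, z) both lie
   in A: four events of probability dist_lin f S ^ 2 each, which gives the
   bound dist_lin f S + 4 dist_lin f S ^ 2.  Both bounds hold for every S and
   trivially for the value 1 (probabilities are at most 1), hence for their
   minimum eps_lin f. *)

Lemma card_bigcup_le (U I : finType) (A : I -> {set U}) :
  (#|\bigcup_i A i| <= \sum_i #|A i|)%N.
Proof.
apply: (big_ind2 (fun (X : {set U}) n => #|X| <= n)%N) => // [|X m Y n hX hY].
  by rewrite cards0.
exact: leq_trans (leq_card_setU X Y).1 (leq_add hX hY).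
Qed.

Lemma card_fst_in (T X : finType) (A : {set T}) :
  #|[set p : T * X | p.1 \in A]| = (#|A| * #|X|)%N.
Proof.
have -> : [set p : T * X | p.1 \in A] = setX A [set: X].
  by apply/setP => p; rewrite !inE andbT.
by rewrite cardsX cardsT.
Qed.

Lemma card_fiberwise_inj (T X : finType) (g : T -> X -> X) (B : {set X}) :
  (forall x, injective (g x)) ->
  #|[set p : T * X | g p.1 p.2 \in B]| = (#|T| * #|B|)%N.
Proof.
move=> g_inj.
have shear_inj : injective (fun p : T * X => (p.1, g p.1 p.2)).
  by move=> [x u] [x' u'] /= [<-] /g_inj ->.
have -> : [set p : T * X | g p.1 p.2 \in B] =
    (fun p : T * X => (p.1, g p.1 p.2)) @^-1: setX [set: T] B.
  by apply/setP => p; rewrite !inE.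
by rewrite card_preimset // cardsX cardsT.
Qed.

Section Cube.
Variable d : nat.
Local Notation T := (cube d).

Lemma linfun_S_bxor (S : {set 'I_d}) (x y : T) :
  linfun_S S (bxor x y) = linfun_S S x (+) linfun_S S y.
Proof.
rewrite /linfun_S !(big_morph odd oddD (id1 := false)) // -big_split /=.
by apply: eq_bigr => i _; rewrite ffunE; case: (x i); case: (y i).
Qed.

Lemma bxorK (x y : T) : bxor x (bxor x y) = y.
Proof. by apply/ffunP => i; rewrite !ffunE addKb. Qed.

Definition partner (b : bool) (x y : T) : T := if b then bxor x y else y.

Lemma partner_inj b x : injective (partner b x).
Proof. by case: b => y z //= e; rewrite -(bxorK x y) e bxorK. Qed.

Variables (f : T -> bool) (S : {set 'I_d}).

Definition disagree : {set T} := [set x | f x != linfun_S S x].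

Lemma violates_disagree (x y : T) : violates f x y ->
  (x \in disagree) || [exists b, partner b x y \in disagree].
Proof.
rewrite /violates; apply: contraLR; rewrite negb_or negb_exists negbK.
move=> /andP [x_ok /forallP y_ok].
have agree b : f (partner b x y) = linfun_S S (partner b x y).
  by apply/eqP; move: (y_ok b); rewrite inE negbK.
move: x_ok; rewrite inE negbK => /eqP ->.
by rewrite (agree false) (agree true) /= linfun_S_bxor.
Qed.

Local Notation a := #|disagree|.

Lemma card_violations :
  (#|[set p : T * T | violates f p.1 p.2]| <= 3 * (a * #|T|))%N.
Proof.
pose E b := [set p : T * T | partner b p.1 p.2 \in disagree].
have cover : [set p : T * T | violates f p.1 p.2] \subset
    [set p : T * T | p.1 \in disagree] :|: \bigcup_b E b.
  apply/subsetP => p; rewrite inE => /violates_disagree viol; apply/setUP.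
  case/orP: viol => [x_bad | /existsP [b p_bad]]; first by left; rewrite inE.
  by right; apply/bigcupP; exists b; rewrite // inE.
have cardE b : #|E b| = (#|T| * a)%N by apply: card_fiberwise_inj; exact: partner_inj.
apply: leq_trans (subset_leq_card cover) _.
apply: leq_trans (leq_card_setU _ _).1 _.
rewrite card_fst_in (leq_trans (leq_add (leqnn _) (@card_bigcup_le _ _ E))) //.
rewrite (eq_bigr _ (fun b _ => cardE b)) sum_nat_const card_bool.
by rewrite (mulnC #|T|) (mulSn 2).
Qed.

Lemma card_double_violations :
  (#|[set p : T * (T * T) | violates f p.1 p.2.1 && violates f p.1 p.2.2]|
     <= a * (#|T| * #|T|) + 4 * (#|T| * (a * a)))%N.
Proof.
pose E (bc : bool * bool) := [set p : T * (T * T) |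
  (partner bc.1 p.1 p.2.1, partner bc.2 p.1 p.2.2) \in setX disagree disagree].
have cover : [set p : T * (T * T) | violates f p.1 p.2.1 && violates f p.1 p.2.2]
    \subset [set p : T * (T * T) | p.1 \in disagree] :|: \bigcup_bc E bc.
  apply/subsetP => p; rewrite inE => /andP [/violates_disagree y_viol].
  move=> /violates_disagree z_viol; apply/setUP.
  case/orP: y_viol => [x_bad | /existsP [b y_bad]]; first by left; rewrite inE.
  case/orP: z_viol => [x_bad | /existsP [c z_bad]]; first by left; rewrite inE.
  by right; apply/bigcupP; exists (b, c); rewrite // inE inE /= y_bad.
have cardE bc : #|E bc| = (#|T| * (a * a))%N.
  rewrite -cardsX; apply: (@card_fiberwise_inj _ _
    (fun x (yz : T * T) => (partner bc.1 x yz.1, partner bc.2 x yz.2))).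
  by move=> x [y z] [y' z'] [/partner_inj -> /partner_inj ->].
apply: leq_trans (subset_leq_card cover) _.
apply: leq_trans (leq_card_setU _ _).1 _.
rewrite card_fst_in card_prod (leq_trans (leq_add (leqnn _) (@card_bigcup_le _ _ E))) //.
rewrite (eq_bigr _ (fun bc _ => cardE bc)) sum_nat_const card_prod card_bool.
exact: leqnn. (* 2 * 2 computes to 4 *)
Qed.

End Cube.

Section Probabilities.
Variable R : numFieldType.

Lemma ratio_bound_pairs (v a N : nat) : (0 < N)%N -> (v <= 3 * (a * N))%N ->
  v%:R / (N * N)%:R <= 3 * ((a%:R : R) / N%:R).
Proof.
move=> N_gt0 le_v; rewrite ler_pdivrMr ?ltr0n ?muln_gt0 ?N_gt0 //.
have -> : 3 * ((a%:R : R) / N%:R) * (N * N)%:R = (3 * (a * N))%:R.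
  by rewrite !natrM; field; rewrite pnatr_eq0 -lt0n.
by rewrite ler_nat.
Qed.

Lemma ratio_bound_triples (v a N : nat) : (0 < N)%N ->
  (v <= a * (N * N) + 4 * (N * (a * a)))%N ->
  v%:R / (N * N * N)%:R <= (a%:R : R) / N%:R + 4 * ((a%:R : R) / N%:R) ^+ 2.
Proof.
move=> N_gt0 le_v; rewrite ler_pdivrMr ?ltr0n ?muln_gt0 ?N_gt0 //.
have -> : ((a%:R : R) / N%:R + 4 * ((a%:R : R) / N%:R) ^+ 2) * (N * N * N)%:R
    = (a * (N * N) + 4 * (N * (a * a)))%:R.
  by rewrite natrD !natrM; field; rewrite pnatr_eq0 -lt0n.
by rewrite ler_nat.
Qed.

Lemma ratio_le1 (v M : nat) : (0 < M)%N -> (v <= M)%N -> (v%:R : R) / M%:R <= 1.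
Proof. by move=> M_gt0 le_v; rewrite ler_pdivrMr ?ltr0n // mul1r ler_nat. Qed.

End Probabilities.

Section Bounds.
Variables (d : nat) (f : cube d -> bool).

Lemma card_cube : #|cube d| = (2 ^ d)%N.
Proof. by rewrite card_ffun card_bool card_ord. Qed.

Lemma cube_size_gt0 : (0 < 2 ^ d)%N.
Proof. by rewrite expn_gt0. Qed.

(* Probabilities are at most 1: this covers the default value of the minimum. *)
Lemma pr_viol_le1 : pr_viol f <= 1.
Proof.
apply: ratio_le1; first by rewrite muln_gt0 cube_size_gt0.
by rewrite -card_cube -card_prod max_card.
Qed.

Lemma pr_viol2_le1 : pr_viol2 f <= 1.
Proof.
apply: ratio_le1; first by rewrite !muln_gt0 cube_size_gt0.
by rewrite -card_cube -mulnA -!card_prod max_card.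
Qed.

Lemma pr_viol_dist_lin S : pr_viol f <= 3 * dist_lin f S.
Proof.
apply: ratio_bound_pairs; first exact: cube_size_gt0.
by rewrite -card_cube; exact: card_violations.
Qed.

Lemma pr_viol2_dist_lin S :
  pr_viol2 f <= dist_lin f S + 4 * dist_lin f S ^+ 2.
Proof.
apply: ratio_bound_triples; first exact: cube_size_gt0.
by rewrite -card_cube; exact: card_double_violations.
Qed.

End Bounds.

Theorem claimB3 (d : nat) (f : cube d -> bool) :
  pr_viol f <= 3 * eps_lin f /\
  pr_viol2 f <= eps_lin f + 4 * eps_lin f ^+ 2.
Proof.
(* eps_lin f is a minimum over the values 1 and dist_lin f S; the bounds hold
   for each of them and a minimum is one of its arguments. *)
apply: (big_ind (fun e => pr_viol f <= 3 * e /\ pr_viol2 f <= e + 4 * e ^+ 2)).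
- have := pr_viol_le1 d f; have := pr_viol2_le1 d f; split; lra.
- by move=> e e' he he'; rewrite /Num.min; case: ifP.
- by move=> S _; split; [exact: pr_viol_dist_lin | exact: pr_viol2_dist_lin].
Qed.
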